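(* For all integers $n\ge1$ and $i\ge1$, the number of partitions $\lambda\vdash n$ in which the part $i$ occurs with multiplicity exactly $i$ equals the number of partitions $\mu\vdash n$ for which there is an index $s$ with $h_{s,1}(\mu)=s$ and $\mu_s=i$.
   Context: A partition $\mu=(\mu_1\ge\cdots\ge\mu_t>0)$ of $n$ has first-column hook lengths $h_{s,1}(\mu)=\mu_s+(t-s)$ for $1\le s\le t$. *)

From mathcomp Require Import all_boot all_order.
Set Implicit Arguments. Unset Strict Implicit. Unset Printing Implicit Defensive.

(* A partition of n is encoded as a nonincreasing n-tuple of naturals
   (entries in 'I_(n.+1)) summing to n, padded with trailing zeros.
   Its parts are the nonzero entries; part s (1-indexed) is the (s-1)-th entry. *)
Definition parts_of n (t : n.-tuple 'I_n.+1) : seq nat := [seq val x | x <- t].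

Definition is_partition n (t : n.-tuple 'I_n.+1) : bool :=
  sorted geq (parts_of t) && (sumn (parts_of t) == n).

Definition plength n (t : n.-tuple 'I_n.+1) : nat := count (fun x => 0 < x) (parts_of t).

Definition part n (t : n.-tuple 'I_n.+1) (s : nat) : nat := nth 0 (parts_of t) s.-1.

Definition hook1 n (t : n.-tuple 'I_n.+1) (s : nat) : nat := part t s + (plength t - s).

Definition mult n (t : n.-tuple 'I_n.+1) (i : nat) : nat := count_mem i (parts_of t).

From mathcomp Require Import all_boot all_order zify.
Set Implicit Arguments. Unset Strict Implicit. Unset Printing Implicit Defensive.

(* Write mu = A ++ i :: B with mu_s = i.  Then h_(s,1)(mu) = s says exactly that
   size A = size B + i - 1; the parts of A are at least i and those of B lie in
   [1, i].  A partition lambda with m_i(lambda) = i is C ++ i^i ++ D, where the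
   parts of C exceed i and those of D are below i; D is determined by its first
   i - 1 column lengths, which shifted by i form a nonincreasing sequence R of
   length i - 1 with parts at least i.  It thus suffices to match the pairs
   (A, B) with the pairs (C, R).  Walk down A with a counter b starting at i:
   when the largest remaining part of B equals b it is glued onto the current
   part a of A, giving the part a + b of C; otherwise a is set aside into R and
   b decreases.  This is reversed by comparing c - b with the next part of R. *)

Lemma geq_trans : transitive geq.
Proof. exact: rev_trans leq_trans. Qed.

Lemma sorted_geq_cons x s :
  sorted geq (x :: s) = all (fun y => y <= x) s && sorted geq s.
Proof. by rewrite /= (path_sortedE geq_trans). Qed.

Lemma sorted_geq_cat_cons A x B :
  sorted geq (A ++ x :: B) =
  [&& sorted geq A, sorted geq B, all (fun a => x <= a) A & all (fun b => b <= x) B].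
Proof.
rewrite !(sorted_pairwise geq_trans) pairwise_cat allrel_consr /=.
apply/idP/idP => [/and4P[/andP[-> _] -> -> ->] //|].
case/and4P=> -> -> hA hB; rewrite hA hB /= !andbT.
apply/allrelP => a b ha hb; exact: leq_trans (allP hB b hb) (allP hA a ha).
Qed.

Lemma nth_sorted_geq (R : seq nat) y z : sorted geq R -> y <= z -> nth 0 R z <= nth 0 R y.
Proof.
move=> hR hyz; case: (ltnP z (size R)) => hz; last by rewrite nth_default.
apply: (sorted_leq_nth geq_trans (fun n => leqnn n) 0 hR) => //.
by rewrite inE (leq_ltn_trans hyz hz).
Qed.

Lemma filter_pred1_nseq (x : nat) s : [seq y <- s | y == x] = nseq (count_mem x s) x.
Proof. by elim: s => //= y s ->; case: eqVneq => [->|]. Qed.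

Lemma sorted_geq_filter_cat (p : pred nat) s :
  (forall x y, x <= y -> p x -> p y) -> sorted geq s ->
  [seq x <- s | p x] ++ [seq x <- s | ~~ p x] = s.
Proof.
move=> p_up; elim: s => // x s IH; rewrite sorted_geq_cons => /andP[hx hs] /=.
case: (boolP (p x)) => [_|hpx] /=; first by rewrite IH.
have hnp : {in s, forall y, ~~ p y}.
  by move=> y /(allP hx) hyx; apply: contra hpx; apply: p_up.
rewrite (@eq_in_filter _ _ pred0) ?filter_pred0 /=; last by move=> y /hnp /negbTE.
by congr (_ :: _); apply/all_filterP/allP.
Qed.

Lemma sorted_geq_split3 i s : sorted geq s ->
  s = [seq x <- s | i < x] ++ nseq (count_mem i s) i ++ [seq x <- s | x < i].
Proof.
move=> hs.
have lt_up x y : x <= y -> i < x -> i < y by move=> hxy /leq_trans; apply.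
have le_up x y : x <= y -> i <= x -> i <= y by move=> hxy /leq_trans; apply.
rewrite -{1}(sorted_geq_filter_cat lt_up hs); congr (_ ++ _).
have hs' : sorted geq [seq x <- s | ~~ (i < x)] := sorted_filter geq_trans _ hs.
rewrite -[LHS](sorted_geq_filter_cat le_up hs').
rewrite -!filter_predI -filter_pred1_nseq.
by congr (_ ++ _); apply: eq_filter => x /=; case: ltngtP.
Qed.

(** * Column lengths *)

(* [conjugate k D] lists the lengths of the first [k] columns of the Young
   diagram of [D]; [of_conjugate k] inverts it on partitions with parts at
   most [k], reading the multiplicity of the part [y.+1] off [R_y - R_(y+1)]. *)
Definition conjugate k (D : seq nat) : seq nat :=
  [seq count (fun d => y < d) D | y <- iota 0 k].

Definition of_conjugate k (R : seq nat) : seq nat :=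
  sort geq (flatten [seq nseq (nth 0 R y - nth 0 R y.+1) y.+1 | y <- iota 0 k]).

Lemma size_conjugate k D : size (conjugate k D) = k.
Proof. by rewrite size_map size_iota. Qed.

Lemma nth_conjugate k D j : all (fun d => d <= k) D ->
  nth 0 (conjugate k D) j = count (fun d => j < d) D.
Proof.
move=> hD; case: (ltnP j k) => hj.
  by rewrite (nth_map 0) ?size_iota // nth_iota.
rewrite nth_default ?size_conjugate // (@eq_in_count _ _ pred0) ?count_pred0 //.
by move=> d /(allP hD) hd /=; rewrite ltnNge (leq_trans hd hj).
Qed.

Lemma conjugate_sorted k D : sorted geq (conjugate k D).
Proof.
apply: homo_sorted (iota_sorted 0 k) => x y /= hxy.
by apply: sub_count => d /=; apply: leq_ltn_trans.
Qed.

Lemma sumn_conjugate k D : all (fun d => d <= k) D -> sumn (conjugate k D) = sumn D.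
Proof.
rewrite /conjugate; elim: D => [|d D IH] /=; first by elim: (iota 0 k).
case/andP=> hd /IH <-.
have -> : forall s, sumn [seq (y < d) + count (fun e => y < e) D | y <- s] =
    count (fun y => y < d) s + sumn [seq count (fun e => y < e) D | y <- s].
  by elim=> //= y s ->; rewrite addnACA.
by rewrite -size_filter (filter_iota_ltn 0 hd) size_iota.
Qed.

Lemma of_conjugate_sorted k R : sorted geq (of_conjugate k R).
Proof. by apply: sort_sorted => x y; apply: leq_total. Qed.

Lemma of_conjugate_range k R : all (fun d => 0 < d <= k) (of_conjugate k R).
Proof.
apply/allP => d; rewrite mem_sort => /flatten_mapP[y].
by rewrite mem_iota => /andP[_ hy] /nseqP[-> _].
Qed.

Lemma count_gt_of_conjugate k R j : sorted geq R -> size R = k ->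
  count (fun d => j < d) (of_conjugate k R) = nth 0 R j.
Proof.
move=> hR hk; rewrite /of_conjugate count_sort count_flatten -map_comp sumnE big_map.
rewrite (_ : iota 0 k = index_iota 0 k); last by rewrite /index_iota subn0.
under eq_bigr => y _ do rewrite /= count_nseq /=.
have F_dec y z : y <= z -> nth 0 R z <= nth 0 R y by apply: nth_sorted_geq.
case: (ltnP j k) => hjk; last first.
  rewrite nth_default ?hk // big_nat big1 // => y /andP[_ hy].
  by rewrite ltnNge (leq_trans hy hjk).
rewrite (big_cat_nat (n := j)) ?(ltnW hjk) //= big_nat big1 ?add0n; last first.
  by move=> y /andP[_ hy]; rewrite ltnS leqNgt hy.
rewrite (eq_big_nat _ _ (F2 := fun y => nth 0 R y - nth 0 R y.+1)); last first.
  by move=> y /andP[hy _]; rewrite ltnS hy mul1n.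
rewrite (telescope_big (fun y z => nth 0 R y - nth 0 R z)); last first.
  move=> y /andP[hjy _]; have := F_dec _ _ (ltnW hjy); have := F_dec y y.+1 (leqnSn y).
  rewrite /=; lia.
by rewrite hjk [nth 0 R k]nth_default ?hk ?subn0.
Qed.

Lemma count_geq_split x (s : seq nat) :
  count (fun d => x <= d) s = count_mem x s + count (fun d => x < d) s.
Proof. by elim: s => //= d s ->; rewrite addnACA; case: ltngtP. Qed.

Lemma perm_count_gt (s1 s2 : seq nat) :
  all (fun d => 0 < d) s1 -> all (fun d => 0 < d) s2 ->
  (forall j, count (fun d => j < d) s1 = count (fun d => j < d) s2) -> perm_eq s1 s2.
Proof.
move=> pos1 pos2 eq_gt; apply/allP => x _; apply/eqP.
have no0 s : all (fun d => 0 < d) s -> count_mem 0 s = 0.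
  by move=> hs; apply/count_memPn/negP => /(allP hs).
case: x => [|x]; first by rewrite !no0.
by apply/(@addIn (count (fun d => x.+1 < d) s1)); rewrite -count_geq_split !eq_gt -count_geq_split.
Qed.

Lemma conjugateK k R : sorted geq R -> size R = k -> conjugate k (of_conjugate k R) = R.
Proof.
move=> hR hk; apply: (@eq_from_nth _ 0) => [|j _]; first by rewrite size_conjugate.
rewrite nth_conjugate ?count_gt_of_conjugate //.
by apply: sub_all (of_conjugate_range k R) => d /andP[].
Qed.

Lemma of_conjugateK k D : sorted geq D -> all (fun d => 0 < d <= k) D ->
  of_conjugate k (conjugate k D) = D.
Proof.
move=> hD hDk; have Dle : all (fun d => d <= k) D by apply: sub_all hDk => d /andP[].
have geq_anti : antisymmetric geq by move=> x y /andP[hxy hyx]; apply/anti_leq/andP.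
apply: sorted_eq geq_trans geq_anti _ _ (of_conjugate_sorted _ _) hD _.
apply: perm_count_gt => [||j].
- by apply: sub_all (of_conjugate_range k _) => d /andP[].
- by apply: sub_all hDk => d /andP[].
by rewrite count_gt_of_conjugate ?nth_conjugate ?size_conjugate ?conjugate_sorted.
Qed.

Lemma sorted_geq_cat_nseq C k x D : 0 < k -> sorted geq C -> sorted geq D ->
  all (fun c => x <= c) C -> all (fun d => d <= x) D -> sorted geq (C ++ nseq k x ++ D).
Proof.
case: k => // k _ hC hD hCx hDx; rewrite /= sorted_geq_cat_cons hC hCx /=.
have nseqD_le : all (fun d => d <= x) (nseq k x ++ D).
  by rewrite all_cat hDx andbT; apply/allP => y /nseqP[-> _].
rewrite nseqD_le andbT; elim: k nseqD_le => [|k IH] //= /andP[_ hle].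
by rewrite -/(sorted geq (x :: _)) sorted_geq_cons hle IH.
Qed.

(** * Gluing a box partition onto a sequence *)

Fixpoint absorb (b : nat) (A B : seq nat) : seq nat * seq nat :=
  match A, B with
  | [::], _ => ([::], [::])
  | a :: A', b' :: B' =>
      if b' == b then ((a + b) :: (absorb b A' B').1, (absorb b A' B').2)
      else ((absorb b.-1 A' B).1, a :: (absorb b.-1 A' B).2)
  | a :: A', [::] => ((absorb b.-1 A' [::]).1, a :: (absorb b.-1 A' [::]).2)
  end.

Fixpoint emit (C : seq nat) : nat -> seq nat -> seq nat * seq nat :=
  if C is c :: C' then
    fix emit_c b R :=
      if R is r :: R' then
        if c - b < r then (r :: (emit_c b.-1 R').1, (emit_c b.-1 R').2)
        else ((c - b) :: (emit C' b R).1, b :: (emit C' b R).2)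
      else ((c - b) :: (emit C' b [::]).1, b :: (emit C' b [::]).2)
  else fun _ R => (R, [::]).

Lemma emit_cons_lt c C b r R : c - b < r ->
  emit (c :: C) b (r :: R) = (r :: (emit (c :: C) b.-1 R).1, (emit (c :: C) b.-1 R).2).
Proof. by move=> /= ->. Qed.

Lemma emit_cons_ge c C b R : head 0 R <= c - b ->
  emit (c :: C) b R = ((c - b) :: (emit C b R).1, b :: (emit C b R).2).
Proof. by case: R => [|r R] //= hr; rewrite ltnNge hr. Qed.

Lemma absorb_nil b A : absorb b A [::] = ([::], A).
Proof. by elim: A b => //= a A IH b; rewrite IH. Qed.

Lemma absorb_cons_eq b a A B :
  absorb b (a :: A) (b :: B) = ((a + b) :: (absorb b A B).1, (absorb b A B).2).
Proof. by rewrite /= eqxx. Qed.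

Lemma absorb_cons_neq b a A b' B : b' != b ->
  absorb b (a :: A) (b' :: B) =
  ((absorb b.-1 A (b' :: B)).1, a :: (absorb b.-1 A (b' :: B)).2).
Proof. by move=> /= /negbTE ->. Qed.

Definition box b (B : seq nat) := sorted geq B && all (fun x => 0 < x <= b) B.

Lemma box_behead b x B : box b (x :: B) -> box b B.
Proof. by rewrite /box sorted_geq_cons /= => /andP[/andP[_ ->] /andP[_ ->]]. Qed.

Lemma box_lower b x B : box b (x :: B) -> x != b -> box b.-1 (x :: B).
Proof.
rewrite /box sorted_geq_cons => /andP[/andP[hB hs] /= /andP[/andP[hx0 hxb] hall]] hneq.
rewrite hB hs /=; have hx : x <= b.-1 by lia.
rewrite hx0 hx; apply/allP => y hy; have /andP[-> _] := allP hall y hy.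
exact: leq_trans (allP hB y hy) hx.
Qed.

Lemma box_head b x B : box b (x :: B) -> 0 < x <= b.
Proof. by case/andP=> _ /andP[]. Qed.

Lemma size_absorb b A B : box b B -> size A = size B + b.-1 -> 0 < b ->
  size (absorb b A B).1 = size B /\ size (absorb b A B).2 = b.-1.
Proof.
elim: A b B => [|a A IH] b B hB hsz hb; first by move: hsz => /= hsz; split; lia.
case: B hB hsz => [|b' B] hB hsz; rewrite /= in hsz; first by rewrite absorb_nil /=; split; lia.
case: (eqVneq b' b) hB => [-> hB|hneq hB].
  have hszA : size A = size B + b.-1 by lia.
  by rewrite absorb_cons_eq /=; have [-> ->] := IH b B (box_behead hB) hszA hb.
have hB' := box_lower hB hneq; have /andP[hb'0 hb'] := box_head hB'.
have hszA : size A = size (b' :: B) + b.-2 by rewrite /=; lia.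
rewrite absorb_cons_neq //=; have [-> ->] := IH b.-1 _ hB' hszA (leq_trans hb'0 hb').
by split; lia.
Qed.

Lemma sumn_absorb b A B : box b B -> size A = size B + b.-1 -> 0 < b ->
  sumn (absorb b A B).1 + sumn (absorb b A B).2 = sumn A + sumn B.
Proof.
elim: A b B => [|a A IH] b B hB hsz hb; first by case: B hsz {hB} => //= _; lia.
case: B hB hsz => [|b' B] hB hsz; rewrite /= in hsz; first by rewrite absorb_nil /= addn0.
case: (eqVneq b' b) hB => [-> hB|hneq hB].
  have hszA : size A = size B + b.-1 by lia.
  by rewrite absorb_cons_eq /=; have := IH b B (box_behead hB) hszA hb; lia.
have hB' := box_lower hB hneq; have /andP[hb'0 hb'] := box_head hB'.
have hszA : size A = size (b' :: B) + b.-2 by rewrite /=; lia.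
rewrite absorb_cons_neq //=; have := IH b.-1 _ hB' hszA (leq_trans hb'0 hb').
rewrite /=; lia.
Qed.

Lemma absorb_snd_subset b A B : {subset (absorb b A B).2 <= A}.
Proof.
elim: A b B => [|a A IH] b [|b' B] //= x.
- by rewrite inE => /predU1P[->|/IH]; rewrite inE ?eqxx // => ->; rewrite orbT.
case: ifP => _ /=; first by move/IH; rewrite inE => ->; rewrite orbT.
by rewrite inE => /predU1P[->|/IH]; rewrite inE ?eqxx // => ->; rewrite orbT.
Qed.

Lemma all_absorb_fst (P : pred nat) b A B :
  {in A & B, forall a x, P (a + x)} -> all P (absorb b A B).1.
Proof.
elim: A b B => [|a A IH] b [|b' B] //= hP; first by rewrite absorb_nil.
have hP' : {in A & b' :: B, forall a x, P (a + x)}.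
  by move=> a' x ha hx; apply: hP; rewrite ?inE ?ha ?orbT.
case: ifP => [/eqP <-|_] /=; last exact: IH.
rewrite hP ?mem_head //= IH // => a' x ha hx.
by apply: hP'; rewrite ?inE ?hx ?orbT.
Qed.

Lemma absorb_sorted b A B : sorted geq A -> sorted geq B ->
  sorted geq (absorb b A B).1 /\ sorted geq (absorb b A B).2.
Proof.
elim: A b B => [|a A IH] b B //; rewrite sorted_geq_cons => /andP[hA hsA] hsB.
case: B hsB => [|b' B] hsB; first by rewrite absorb_nil sorted_geq_cons hA.
have hR (b'' : nat) (B' : seq nat) : all (fun x => x <= a) (absorb b'' A B').2.
  by apply/allP => x /absorb_snd_subset /(allP hA).
move: (hsB); rewrite sorted_geq_cons => /andP[hB hsB'].
case: (eqVneq b' b) hB hsB' => [-> hB hsB'|hneq _ _].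
  have [IH1 IH2] := IH b B hsA hsB'; rewrite absorb_cons_eq sorted_geq_cons IH1 IH2.
  split=> //; rewrite andbT; apply: all_absorb_fst => a' x /(allP hA) ha' /(allP hB) hx.
  exact: leq_add.
have [IH1 IH2] := IH b.-1 (b' :: B) hsA hsB.
by rewrite absorb_cons_neq // sorted_geq_cons IH1 IH2 hR.
Qed.

Lemma emit_ind (P : seq nat -> nat -> seq nat -> Prop) :
  (forall b R, P [::] b R) ->
  (forall c C b R, head 0 R <= c - b -> P C b R -> P (c :: C) b R) ->
  (forall c C b r R, c - b < r -> P (c :: C) b.-1 R -> P (c :: C) b (r :: R)) ->
  forall C b R, P C b R.
Proof.
move=> P0 Pge Plt; elim=> [|c C IHC] // b R.
elim: R b => [|r R IHR] b; first exact: Pge.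
case: (ltnP (c - b) r) => hcr; first exact: Plt.
exact: Pge.
Qed.

Lemma size_emit C b R :
  size (emit C b R).1 = size C + size R /\ size (emit C b R).2 = size C.
Proof.
move: C b R; apply: emit_ind => [b R|c C b R hcR [IH1 IH2]|c C b r R hcr [IH1 IH2]] //.
  by rewrite emit_cons_ge //= IH1 IH2.
by rewrite emit_cons_lt //= IH1 IH2 addnS.
Qed.

Lemma sumn_emit C b R : all (fun c => b <= c) C ->
  sumn (emit C b R).1 + sumn (emit C b R).2 = sumn C + sumn R.
Proof.
move: C b R; apply: emit_ind => [b R|c C b R hcR IH|c C b r R hcr IH].
- by rewrite /= addn0.
- case/andP=> hbc /IH; rewrite emit_cons_ge //=; lia.
move=> hC; have := IH _; rewrite emit_cons_lt //=.
have hC' : all (fun c => b.-1 <= c) (c :: C).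
  by apply: sub_all hC => x; apply: leq_trans; apply: leq_pred.
move/(_ hC'); lia.
Qed.

Lemma box_widen b b' B : b <= b' -> box b B -> box b' B.
Proof.
move=> hbb /andP[hs hB]; rewrite /box hs; apply: sub_all hB => x /andP[-> hx].
exact: leq_trans hx hbb.
Qed.

Lemma box_cons b B : 0 < b -> box b B -> box b (b :: B).
Proof.
move=> hb /andP[hs hB]; rewrite /box sorted_geq_cons hs /= hb leqnn /= hB !andbT.
by apply: sub_all hB => x /andP[].
Qed.

Lemma emit_snd_box C b R : size R = b.-1 -> 0 < b -> box b (emit C b R).2.
Proof.
move: C b R; apply: emit_ind => [b R|c C b R hcR IH|c C b r R hcr IH] hsz hb //.
  by rewrite emit_cons_ge //=; apply: box_cons => //; apply: IH.
rewrite emit_cons_lt //=; apply: box_widen (leq_pred b) _.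
by apply: IH; move: hsz => /=; lia.
Qed.

Lemma emit_fst_ge lo C b R : all (fun c => lo < c) C -> all (fun r => lo <= r) R ->
  size R = b.-1 -> 0 < b -> all (fun a => lo <= a) (emit C b R).1.
Proof.
move: C b R; apply: emit_ind => [b R|c C b R hcR IH|c C b r R hcr IH] //.
  case/andP=> hc hC hR hsz hb; rewrite emit_cons_ge //= IH // andbT.
  case: R hR hsz hcR {IH} => [_ /= hsz _|r R /andP[hr _] _ /= hrc]; first by lia.
  exact: leq_trans hr hrc.
move=> hC /andP[hr hR] hsz hb; rewrite emit_cons_lt //= hr IH //; move: hsz => /=; lia.
Qed.

Lemma sorted_geq_path_head (R : seq nat) : sorted geq R -> path geq (head 0 R) R.
Proof. by case: R => //= r R ->; rewrite leqnn. Qed.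

Lemma emit_fst_path C b R : sorted geq C -> sorted geq R ->
  path geq (maxn (head 0 R) (head 0 C - b)) (emit C b R).1.
Proof.
move: C b R; apply: emit_ind => [b R|c C b R hcR IH|c C b r R hcr IH] hC hR.
- by rewrite /= sub0n maxn0; apply: sorted_geq_path_head.
- rewrite emit_cons_ge //= leq_maxr /=.
  apply: (path_le geq_trans _ (IH (path_sorted hC) hR)).
  rewrite /= geq_max hcR /=; apply: leq_sub2r.
  by case: C hC {IH} => //= c' C /andP[].
rewrite emit_cons_lt //; cbn [fst path head]; apply/andP; split; first exact: leq_maxl.
apply: (path_le geq_trans _ (IH hC (path_sorted hR))) => /=.
rewrite geq_max; apply/andP; split; last by lia.
by case: R hR {IH} => //= r' R /andP[].
Qed.

Lemma emit_fst_sorted C b R : sorted geq C -> sorted geq R -> sorted geq (emit C b R).1.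
Proof. by move=> hC hR; apply: path_sorted (emit_fst_path b hC hR). Qed.

Lemma absorb_emit C b R : all (fun c => b <= c) C -> size R = b.-1 -> 0 < b ->
  absorb b (emit C b R).1 (emit C b R).2 = (C, R).
Proof.
move: C b R; apply: emit_ind => [b R|c C b R hcR IH|c C b r R hcr IH] hC hsz hb.
- by rewrite /= absorb_nil.
- move: hC => /andP[hbc hC]; rewrite emit_cons_ge //; cbn [fst snd].
  by rewrite absorb_cons_eq IH // subnK.
have hsz' : size R = b.-2 by move: hsz => /=; lia.
have hb' : 0 < b.-1 by move: hsz => /=; lia.
have hC' : all (fun x => b.-1 <= x) (c :: C).
  by apply: sub_all hC => x; apply: leq_trans; apply: leq_pred.
have /andP[_ hB] := emit_snd_box (c :: C) hsz' hb'.
rewrite emit_cons_lt //; cbn [fst snd].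
case: (emit _ b.-1 R) (IH hC' hsz' hb') hB => A [|x B] IHAB; first by rewrite /= IHAB.
case/andP=> /andP[_ hx] _; rewrite absorb_cons_neq ?IHAB //.
by rewrite neq_ltn (leq_ltn_trans hx) // prednK.
Qed.

Lemma emit_absorb b A B : sorted geq A -> all (fun a => 0 < a) A -> box b B ->
  size A = size B + b.-1 -> 0 < b -> emit (absorb b A B).1 b (absorb b A B).2 = (A, B).
Proof.
elim: A b B => [|a A IH] b B hsA hpA hB hsz hb.
  by case: B hsz {hB} => //= _; case: b hb.
move: hsA hpA; rewrite sorted_geq_cons => /andP[hA hsA] /andP[ha hpA].
case: B hB hsz => [|b' B] hB hsz; first by rewrite absorb_nil.
rewrite /= in hsz.
case: (eqVneq b' b) hB => [-> hB|hneq hB].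
  rewrite absorb_cons_eq emit_cons_ge; last first.
    rewrite addnK; case: (absorb b A B).2 (@absorb_snd_subset b A B) => //= r R.
    by move/(_ r (mem_head _ _))/(allP hA).
  by cbn [fst snd]; rewrite addnK IH //; [exact: box_behead hB | lia].
have hB' := box_lower hB hneq; have /andP[hb'0 hb'] := box_head hB'.
have hszA : size A = size (b' :: B) + b.-2 by rewrite /=; lia.
have hb1 : 0 < b.-1 := leq_trans hb'0 hb'.
have [hszC _] := size_absorb hB' hszA hb1.
have hlt : all (fun c => c - b < a) (absorb b.-1 A (b' :: B)).1.
  apply: all_absorb_fst => a' x /(allP hA) ha' /(allP (elimTF andP hB').2) /andP[_ hx].
  lia.
have IHCR := IH b.-1 _ hsA hpA hB' hszA hb1.
rewrite absorb_cons_neq //.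
case: (absorb b.-1 A (b' :: B)) hszC hlt IHCR => [[|c C] R] //; cbn [fst snd].
by move=> _ /andP[hc _] IHCR; rewrite emit_cons_lt // IHCR.
Qed.

(** * The bijection on partitions *)

Definition partition_of n (s : seq nat) :=
  [&& sorted geq s, all (fun x => 0 < x) s & sumn s == n].

Definition hook_split i (mu : seq nat) :=
  exists A B, mu = A ++ i :: B /\ size A = size B + i.-1.

Definition mult_to_hook i (la : seq nat) : seq nat :=
  let AB := emit [seq x <- la | i < x] i
                 [seq i + c | c <- conjugate i.-1 [seq x <- la | x < i]] in
  AB.1 ++ i :: AB.2.

Definition hook_to_mult i (mu : seq nat) : seq nat :=
  let s := (size mu + i)./2 in
  let CR := absorb i (take s.-1 mu) (drop s mu) in
  CR.1 ++ nseq i i ++ of_conjugate i.-1 [seq r - i | r <- CR.2].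

Lemma sumn_shift i (s : seq nat) : sumn [seq i + x | x <- s] = i * size s + sumn s.
Proof. by elim: s => [|x s IH] /=; rewrite ?muln0 // IH mulnS addnACA. Qed.

Lemma half_size_hook (A B : seq nat) x i : size A = size B + i.-1 -> 0 < i ->
  (size (A ++ x :: B) + i)./2 = (size A).+1.
Proof.
move=> hsz hi; rewrite size_cat /= hsz.
have -> : size B + i.-1 + (size B).+1 + i = (size B + i.-1).+1.*2 by rewrite -addnn; lia.
by rewrite doubleK.
Qed.

Lemma hook_to_mult_cat i (A B : seq nat) : size A = size B + i.-1 -> 0 < i ->
  hook_to_mult i (A ++ i :: B) =
  (absorb i A B).1 ++ nseq i i ++ of_conjugate i.-1 [seq r - i | r <- (absorb i A B).2].
Proof.
move=> hsz hi; rewrite /hook_to_mult half_size_hook //= take_size_cat //.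
by rewrite -cat_rcons drop_size_cat ?size_rcons.
Qed.

Section MultToHook.

Variables (n i : nat) (la : seq nat).
Hypotheses (i_gt0 : 0 < i) (la_part : partition_of n la) (la_mult : count_mem i la = i).

Let C := [seq x <- la | i < x].
Let D := [seq x <- la | x < i].
Let R := [seq i + c | c <- conjugate i.-1 D].

Let la_sorted : sorted geq la. Proof. by case/and3P: la_part. Qed.

Let la_split : la = C ++ nseq i i ++ D.
Proof. by rewrite {1}(sorted_geq_split3 i la_sorted) la_mult. Qed.

Let C_sorted : sorted geq C. Proof. exact: (sorted_filter geq_trans _ la_sorted). Qed.

Let C_gt : all (fun x => i < x) C. Proof. exact: filter_all. Qed.

Let C_ge : all (fun x => i <= x) C. Proof. by apply: sub_all C_gt => x /ltnW. Qed.

Let D_sorted : sorted geq D. Proof. exact: (sorted_filter geq_trans _ la_sorted). Qed.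

Let D_range : all (fun d => 0 < d <= i.-1) D.
Proof.
case/and3P: la_part => _ /allP la_pos _; apply/allP => x.
by rewrite mem_filter => /andP[hxi /la_pos ->]; rewrite -ltnS prednK.
Qed.

Let D_le : all (fun d => d <= i.-1) D. Proof. by apply: sub_all D_range => d /andP[]. Qed.

Let size_R : size R = i.-1. Proof. by rewrite size_map size_conjugate. Qed.

Let R_ge : all (fun r => i <= r) R. Proof. by apply/allP => _ /mapP[c _ ->]; apply: leq_addr. Qed.

Let R_sorted : sorted geq R.
Proof. by apply: homo_sorted (conjugate_sorted _ _) => x y /=; rewrite leq_add2l. Qed.

Lemma mult_to_hook_partition : partition_of n (mult_to_hook i la).
Proof.
have A_ge := emit_fst_ge C_gt R_ge size_R i_gt0.
have /andP[B_sorted B_range] := emit_snd_box C size_R i_gt0.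
have sum_AB := sumn_emit R C_ge.
have sum_R : sumn R = i * i.-1 + sumn D by rewrite sumn_shift size_conjugate sumn_conjugate.
have sum_la : sumn la = n by case/and3P: la_part => _ _ /eqP.
have sq_i : i * i = i * i.-1 + i by rewrite -mulnSr prednK.
rewrite /mult_to_hook -/C -/D -/R /partition_of sorted_geq_cat_cons all_cat /=.
apply/and3P; split.
- by rewrite emit_fst_sorted // B_sorted A_ge; apply: sub_all B_range => x /andP[].
- rewrite i_gt0 /=; apply/andP; split; last by apply: sub_all B_range => x /andP[].
  by apply: sub_all A_ge => x; apply: leq_trans.
move: sum_la; rewrite sumn_cat /= la_split !sumn_cat sumn_nseq; lia.
Qed.

Lemma mult_to_hook_split : hook_split i (mult_to_hook i la).
Proof.
have [A_sz B_sz] := size_emit C i R.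
by exists (emit C i R).1, (emit C i R).2; rewrite A_sz B_sz size_R.
Qed.

Lemma mult_to_hookK : hook_to_mult i (mult_to_hook i la) = la.
Proof.
have [A_sz B_sz] := size_emit C i R.
rewrite /mult_to_hook -/C -/D -/R hook_to_mult_cat ?A_sz ?B_sz ?size_R //.
rewrite absorb_emit //= -map_comp (eq_map (g := id)) => [|c]; last exact: addKn.
by rewrite map_id of_conjugateK // -la_split.
Qed.

End MultToHook.

Section HookToMult.

Variables (n i : nat) (A B : seq nat).
Hypotheses (i_gt0 : 0 < i) (mu_part : partition_of n (A ++ i :: B))
  (size_AB : size A = size B + i.-1).

Let A_sorted : sorted geq A.
Proof. by case/and3P: mu_part; rewrite sorted_geq_cat_cons => /and4P[]. Qed.

Let A_ge : all (fun a => i <= a) A.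
Proof. by case/and3P: mu_part; rewrite sorted_geq_cat_cons => /and4P[]. Qed.

Let A_pos : all (fun a => 0 < a) A.
Proof. by apply: sub_all A_ge => a; apply: leq_trans. Qed.

Let B_box : box i B.
Proof.
case/and3P: mu_part; rewrite sorted_geq_cat_cons all_cat /= => /and4P[_ hB _ hBi] /and3P[_ _ hB0] _.
rewrite /box hB; apply/allP => b hb; rewrite (allP hB0 b hb); exact: (allP hBi b hb).
Qed.

Let C := (absorb i A B).1.
Let R := (absorb i A B).2.
Let D := of_conjugate i.-1 [seq r - i | r <- R].

Let size_R : size R = i.-1. Proof. by have [] := size_absorb B_box size_AB i_gt0. Qed.

Let C_sorted : sorted geq C. Proof. by have [] := absorb_sorted i A_sorted (elimTF andP B_box).1. Qed.

Let R_sorted : sorted geq R. Proof. by have [] := absorb_sorted i A_sorted (elimTF andP B_box).1. Qed.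

Let C_gt : all (fun c => i < c) C.
Proof.
apply: all_absorb_fst => a b /(allP A_ge) ha /(allP (elimTF andP B_box).2) /andP[hb _].
by rewrite -addn1 leq_add.
Qed.

Let C_ge : all (fun c => i <= c) C. Proof. by apply: sub_all C_gt => c /ltnW. Qed.

Let R_ge : all (fun r => i <= r) R.
Proof. by apply/allP => r /absorb_snd_subset /(allP A_ge). Qed.

Let D_range : all (fun d => 0 < d <= i.-1) D. Proof. exact: of_conjugate_range. Qed.

Let D_sorted : sorted geq D. Proof. exact: of_conjugate_sorted. Qed.

Let D_le : all (fun d => d <= i) D.
Proof. by apply: sub_all D_range => d /andP[_ /leq_trans]; apply; apply: leq_pred. Qed.

Let conjugate_D : [seq i + c | c <- conjugate i.-1 D] = R.
Proof.
rewrite conjugateK ?size_map ?size_R //; last first.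
  by apply: homo_sorted R_sorted => x y; apply: leq_sub2r.
rewrite -map_comp -[RHS]map_id; apply/eq_in_map => r /(allP R_ge) hr /=.
exact: subnKC.
Qed.

Lemma hook_to_mult_partition : partition_of n (hook_to_mult i (A ++ i :: B)).
Proof.
have sum_CR : sumn C + sumn R = sumn A + sumn B := sumn_absorb B_box size_AB i_gt0.
have sum_R : sumn R = i * i.-1 + sumn D.
  rewrite -conjugate_D sumn_shift size_conjugate sumn_conjugate //.
  by apply: sub_all D_range => d /andP[].
have sum_mu : sumn (A ++ i :: B) = n by case/and3P: mu_part => _ _ /eqP.
have sq_i : i * i = i * i.-1 + i by rewrite -mulnSr prednK.
rewrite hook_to_mult_cat // -/C -/R -/D /partition_of sorted_geq_cat_nseq //.
rewrite /= !all_cat; apply/andP; split.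
  apply/and3P; split; first by apply: sub_all C_gt => c; apply: leq_ltn_trans.
    by apply/allP => x /nseqP[->].
  by apply: sub_all D_range => d /andP[].
move: sum_mu; rewrite !sumn_cat sumn_nseq /=; lia.
Qed.

Lemma hook_to_mult_mult : count_mem i (hook_to_mult i (A ++ i :: B)) = i.
Proof.
rewrite hook_to_mult_cat // -/C -/R -/D !count_cat count_nseq /= eqxx mul1n.
have -> : count_mem i C = 0 by apply/count_memPn/negP => /(allP C_gt); rewrite ltnn.
have -> : count_mem i D = 0.
  by apply/count_memPn/negP => /(allP D_range) /andP[_]; rewrite leqNgt ltn_predL i_gt0.
by rewrite addn0.
Qed.

Lemma hook_to_multK : mult_to_hook i (hook_to_mult i (A ++ i :: B)) = A ++ i :: B.
Proof.
have filter_gt : [seq x <- C ++ nseq i i ++ D | i < x] = C.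
  rewrite !filter_cat filter_nseq ltnn (all_filterP C_gt) (@eq_in_filter _ _ pred0) //.
    by rewrite filter_pred0 cats0.
  by move=> d /(allP D_range) /andP[_ hd]; rewrite ltnNge (leq_trans hd (leq_pred i)).
have filter_lt : [seq x <- C ++ nseq i i ++ D | x < i] = D.
  rewrite !filter_cat filter_nseq ltnn (@eq_in_filter _ _ pred0 C) ?filter_pred0 /=.
    by apply/all_filterP; apply: sub_all D_range => d /andP[_ /leq_ltn_trans]; apply; rewrite prednK.
  by move=> c /(allP C_gt) hc; rewrite ltnNge ltnW.
rewrite /mult_to_hook hook_to_mult_cat // -/C -/R -/D filter_gt filter_lt conjugate_D.
by rewrite emit_absorb.
Qed.

End HookToMult.

(** * Partitions as padded tuples *)

Lemma card_in_bij (T U : finType) (P : {pred T}) (Q : {pred U}) (f : T -> U) (g : U -> T) :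
  {in P, forall x, f x \in Q} -> {in Q, forall y, g y \in P} ->
  {in P, cancel f g} -> {in Q, cancel g f} -> #|P| = #|Q|.
Proof.
move=> fPQ gQP fK gK; apply/eqP; rewrite eqn_leq; apply/andP; split.
  rewrite -(card_in_imset (can_in_inj fK)); apply/subset_leq_card/subsetP.
  by move=> _ /imsetP[x hx ->]; apply: fPQ.
rewrite -(card_in_imset (can_in_inj gK)); apply/subset_leq_card/subsetP.
by move=> _ /imsetP[y hy ->]; apply: gQP.
Qed.

Section TupleEncoding.

Variable n : nat.
Implicit Type t : n.-tuple 'I_n.+1.

Definition decode t : seq nat := [seq x <- parts_of t | 0 < x].

Definition encode (s : seq nat) : n.-tuple 'I_n.+1 := [tuple inord (nth 0 s j) | j < n].

Lemma parts_of_decode t : is_partition t ->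
  parts_of t = decode t ++ nseq (count_mem 0 (parts_of t)) 0.
Proof.
case/andP=> hs _; rewrite -{1}(@sorted_geq_filter_cat (fun x => 0 < x) _ _ hs); last first.
  by move=> x y hxy /leq_trans; apply.
by congr (_ ++ _); rewrite -filter_pred1_nseq; apply: eq_filter => x /=; rewrite lt0n negbK.
Qed.

Lemma decode_partition t : is_partition t -> partition_of n (decode t).
Proof.
move=> ht; have /andP[hs /eqP hsum] := ht.
rewrite /partition_of filter_all (sorted_filter geq_trans) //= -hsum.
by rewrite [in X in _ == X](parts_of_decode ht) sumn_cat sumn_nseq addn0.
Qed.

Lemma count_decode t i : 0 < i -> count_mem i (decode t) = mult t i.
Proof.
move=> hi; rewrite /mult /decode count_filter; apply: eq_count => x /=.
by case: eqP => // ->; rewrite hi.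
Qed.

Lemma size_le_sumn (s : seq nat) : all (fun x => 0 < x) s -> size s <= sumn s.
Proof. by elim: s => //= x s IH /andP[hx /IH]; rewrite -add1n; apply: leq_add. Qed.

Lemma mem_le_sumn (s : seq nat) x : x \in s -> x <= sumn s.
Proof. by elim: s => //= y s IH; rewrite inE => /predU1P[->|/IH]; lia. Qed.

Lemma parts_of_encode s : partition_of n s -> parts_of (encode s) = s ++ nseq (n - size s) 0.
Proof.
case/and3P=> _ hpos /eqP hsum; have hsz : size s <= n by rewrite -hsum size_le_sumn.
apply: (@eq_from_nth _ 0) => [|j]; first by rewrite size_map size_tuple size_cat size_nseq subnKC.
rewrite size_map size_tuple => hj; rewrite (nth_map ord0) ?size_tuple //.
rewrite -[j]/(val (Ordinal hj)) -tnth_nth tnth_mktuple /= inordK; last first.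
  case: (ltnP j (size s)) => hjs; last by rewrite nth_default.
  by rewrite ltnS -hsum mem_le_sumn // mem_nth.
by rewrite nth_cat; case: ltnP => // hjs; rewrite nth_nseq nth_default // if_same.
Qed.

Lemma encode_partition s : partition_of n s -> is_partition (encode s).
Proof.
move=> hs; rewrite /is_partition parts_of_encode //; case/and3P: hs => hsort _ /eqP hsum.
rewrite sumn_cat sumn_nseq mul0n addn0 hsum eqxx andbT.
case: (n - size s) => [|k]; first by rewrite cats0.
by rewrite -[_ ++ _]cats0 -catA sorted_geq_cat_nseq //; apply/allP.
Qed.

Lemma encodeK s : partition_of n s -> decode (encode s) = s.
Proof.
move=> hs; rewrite /decode parts_of_encode // filter_cat filter_nseq /= cats0.
by apply/all_filterP; case/and3P: hs.
Qed.

Lemma decodeK t : is_partition t -> encode (decode t) = t.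
Proof.
move=> ht; apply: eq_from_tnth => j; rewrite tnth_mktuple; apply: val_inj => /=.
have -> : nth 0 (decode t) j = tnth t j.
  rewrite (tnth_nth ord0) -(nth_map ord0 0 val) ?size_tuple // -/(parts_of t).
  rewrite [in RHS](parts_of_decode ht) nth_cat; case: ltnP => // hj.
  by rewrite nth_default // nth_nseq if_same.
by rewrite inordK.
Qed.

Lemma plength_decode t : plength t = size (decode t).
Proof. by rewrite /plength /decode size_filter. Qed.

Lemma part_decode t s : is_partition t -> s.-1 < size (decode t) ->
  part t s = nth 0 (decode t) s.-1.
Proof. by move=> ht hs; rewrite /part (parts_of_decode ht) nth_cat hs. Qed.

Lemma hook_splitP t i : 0 < i -> is_partition t ->
  reflect (hook_split i (decode t))
    [exists s : 'I_n.+1, [&& 1 <= val s <= plength t,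
                             hook1 t (val s) == val s & part t (val s) == i]].
Proof.
move=> hi ht; rewrite /hook1 plength_decode; apply: (iffP existsP).
  case=> -[v hv] /= /and3P[/andP[hv1 hvd]].
  have hv' : v.-1 < size (decode t) by rewrite prednK.
  rewrite (part_decode ht hv') => /eqP hhook /eqP hpart.
  exists (take v.-1 (decode t)), (drop v (decode t)); split.
    by rewrite -{1}(cat_take_drop v.-1 (decode t)) (drop_nth 0) // hpart prednK.
  by rewrite size_take size_drop hv'; lia.
case=> A [B [hd hsz]].
have /and3P[_ hpos /eqP hsum] := decode_partition ht.
have hsA : (size A).+1 < n.+1.
  by rewrite ltnS -hsum (leq_trans _ (size_le_sumn hpos)) // hd size_cat /= addnS ltnS leq_addr.
exists (Ordinal hsA); rewrite /= (part_decode ht) hd size_cat /= ?addnS ?ltnS ?leq_addr //.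
by rewrite nth_cat ltnn subnn /= eqxx andbT; apply/eqP; lia.
Qed.

End TupleEncoding.

Theorem proposition2p3 (n i : nat) (hn : 1 <= n) (hi : 1 <= i) :
  #|[set l : n.-tuple 'I_n.+1 | is_partition l && (mult l i == i)]| =
  #|[set m : n.-tuple 'I_n.+1 | is_partition m &&
      [exists s : 'I_n.+1, [&& 1 <= val s <= plength m,
                              hook1 m (val s) == val s & part m (val s) == i]]]|.
Proof.
apply: (card_in_bij (f := fun t => encode n (mult_to_hook i (decode t)))
                    (g := fun t => encode n (hook_to_mult i (decode t)))) => t.
- rewrite !inE => /andP[ht /eqP hm]; rewrite -count_decode // in hm.
  have hmu := mult_to_hook_partition hi (decode_partition ht) hm.
  rewrite encode_partition //=; apply/(hook_splitP hi (encode_partition hmu)).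
  by rewrite encodeK //; apply: mult_to_hook_split.
- rewrite !inE => /andP[ht /(hook_splitP hi ht)[A [B [hd hsz]]]].
  have hmu := decode_partition ht; rewrite hd in hmu.
  have hla := hook_to_mult_partition hi hmu hsz.
  by rewrite hd encode_partition //= -count_decode // encodeK // (hook_to_mult_mult hi hmu hsz).
- rewrite inE => /andP[ht /eqP hm]; rewrite -count_decode // in hm.
  have hmu := mult_to_hook_partition hi (decode_partition ht) hm.
  by rewrite encodeK // (mult_to_hookK hi (decode_partition ht) hm) decodeK.
rewrite inE => /andP[ht /(hook_splitP hi ht)[A [B [hd hsz]]]].
have hmu := decode_partition ht; rewrite hd in hmu.
have hla := hook_to_mult_partition hi hmu hsz.
by rewrite hd encodeK // (hook_to_multK hi hmu hsz) -hd decodeK.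
Qed.
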